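(* Assume Hypotheses 1, 2 and 3 (see context). For any $x\in\Gamma$ and any $\mathbf{x}\in T(x)$, $$\|Q(t,x)\mathbf{x}\|\le 2\|\mathbf{x}\|\exp\Big(\int_0^t\big(\|D_ag(\Phi(s,x))\|+\ell(\Phi(s,x))\big)\,ds\Big)\quad\text{for all }t\ge0.$$
   Context: System $\dot x=F(x)$ with $F=(f,g)$, i.e. $\dot a=f(a,z)$, $\dot z=g(a,z)$, $(a,z)\in\mathbb{R}^n\times\mathbb{R}^m$, $X=\mathbb{R}^n\times\mathbb{R}^m$, flow $\Phi(t,x)$. Euclidean inner product, norm, operator norm. $\mathcal{L}(x_1,x_2)=\|a_2-a_1\|^2-\|z_2-z_1\|^2$, $\mathcal{C}(x)=\{x'\in X:\mathcal{L}(x',x)\ge0\}$, $\mathbf{0}$ the zero vector of $X$; $\Pi(a,z)=a$, $\Pi_\perp(a,z)=z$; $\mathbb{B}_d(x)=\{(a',z'):\|a'-a\|\le d,\|z'-z\|\le d\}$. $\Gamma\subseteq U$ positively invariant means $\Phi(t,x)$ is defined for all $t\ge0$ for $x\in\Gamma$ and $\Phi(t,\Gamma)\subseteq\Gamma$. Hypothesis 1: $U$ open and convex, and there is $d>0$ with $\mathcal{C}(x)\cap U\subset\mathbb{B}_d(x)$ for all $x\in U$. Hypothesis 2: $f,g$ are $C^1$ on $U$; there exist continuous $\alpha>0$, $\ell\ge0$ on $U$ and $c_1>0$ with, for all $x\in U$: $\langle a',D_af(x)a'\rangle\ge\alpha(x)\|a'\|^2$; $\langle z',D_zg(x)z'\rangle\le\ell(x)\|z'\|^2$;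 $\alpha(x)\ge\ell(x)+\|D_zf(x)\|+\|D_ag(x)\|+c_1$. Hypothesis 3: $\Gamma\subset U$ is positively invariant and $\Pi_\perp(\Gamma)=\Pi_\perp(U)$. For $x\in\Gamma$, $Q(t,x)$ ($t\ge0$) denotes the fundamental matrix solution of the variational equation $\dot{\mathbf{x}}=DF(\Phi(t,x))\mathbf{x}$ with $Q(0,x)=I$. For $x\in\Gamma$, $T(x):=\{\mathbf{x}\in X: \mathcal{L}(Q(t,x)\mathbf{x},\mathbf{0})\le0\text{ for all }t\ge0\}$, i.e. the set of $\mathbf{x}$ with $Q(t,x)\mathbf{x}\notin\operatorname{int}\mathcal{C}(\mathbf{0})$ for all $t\ge0$. *)

From Stdlib Require Import Reals Lra ClassicalEpsilon.
Open Scope R_scope.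

(* Points of R^k are represented as functions nat -> R; only the indices
   i < k are meaningful.  A point of X = R^n x R^m is a vector of length
   N = n + m whose first n coordinates form a and the next m form z. *)
Definition vec := nat -> R.
Definition mat := nat -> nat -> R.

Fixpoint sumR (k : nat) (f : nat -> R) : R :=
  match k with O => 0 | S k' => sumR k' f + f k' end.

Definition ip (k : nat) (u v : vec) : R := sumR k (fun i => u i * v i).
Definition norm (k : nat) (u : vec) : R := sqrt (ip k u u).

Definition vadd (u v : vec) : vec := fun i => u i + v i.
Definition vsub (u v : vec) : vec := fun i => u i - v i.
Definition vscal (c : R) (u : vec) : vec := fun i => c * u i.

Definition matvec (q : nat) (A : mat) (v : vec) : vec :=
  fun i => sumR q (fun j => A i j * v j).
Definition matmul (q : nat) (A B : mat) : mat :=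
  fun i j => sumR q (fun k => A i k * B k j).

Definition opnorm (p q : nat) (A : mat) : R :=
  epsilon (inhabits 0)
    (fun r => is_lub (fun y => exists v, norm q v <= 1 /\ y = norm p (matvec q A v)) r).

Definition proj_a (x : vec) : vec := x.                   (* use with dim n *)
Definition proj_z (n : nat) (x : vec) : vec := fun i => x (n + i)%nat. (* dim m *)

Definition Lf (n m : nat) (x1 x2 : vec) : R :=
  (norm n (proj_a (vsub x2 x1)))^2 - (norm m (proj_z n (vsub x2 x1)))^2.

Definition Ccone (n m : nat) (x x' : vec) : Prop := Lf n m x' x >= 0.

Definition Bd (n m : nat) (d : R) (x x' : vec) : Prop :=
  norm n (proj_a (vsub x' x)) <= d /\ norm m (proj_z n (vsub x' x)) <= d.

Definition zero_vec : vec := fun _ => 0.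

Definition is_open (N : nat) (U : vec -> Prop) : Prop :=
  forall x, U x -> exists eps, eps > 0 /\
    forall y, norm N (vsub y x) < eps -> U y.

Definition is_convex (U : vec -> Prop) : Prop :=
  forall x y lam, U x -> U y -> 0 <= lam <= 1 ->
    U (vadd (vscal lam x) (vscal (1 - lam) y)).

Definition cont_on (N : nat) (U : vec -> Prop) (h : vec -> R) : Prop :=
  forall x, U x -> forall eps, eps > 0 -> exists delta, delta > 0 /\
    forall y, U y -> norm N (vsub y x) < delta -> Rabs (h y - h x) < eps.

Definition frechet_on (N : nat) (U : vec -> Prop) (F : vec -> vec) (DF : vec -> mat) : Prop :=
  forall x, U x -> forall eps, eps > 0 -> exists delta, delta > 0 /\
    forall h, norm N h < delta ->
      norm N (vsub (vsub (F (vadd x h)) (F x)) (matvec N (DF x) h)) <= eps * norm N h.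

Definition Daf (DF : vec -> mat) (x : vec) : mat := fun i j => DF x i j.
Definition Dzf (n : nat) (DF : vec -> mat) (x : vec) : mat := fun i j => DF x i (n + j)%nat.
Definition Dag (n : nat) (DF : vec -> mat) (x : vec) : mat := fun i j => DF x (n + i)%nat j.
Definition Dzg (n : nat) (DF : vec -> mat) (x : vec) : mat :=
  fun i j => DF x (n + i)%nat (n + j)%nat.

(* Let q(s) = Q(s,x) v with v in T(x), and write q = (a, z).  Membership in
   T(x) says exactly that |a(s)| <= |z(s)| for all s >= 0.  Along the orbit
   y(s) = Phi(s,x) the variational equation gives
     (|z|^2)' = 2 <z, D_a g(y) a + D_z g(y) z>
              <= 2 (|D_a g(y)| |a| |z| + l(y) |z|^2) <= 2 k(s) |z|^2,
   with k = |D_a g(y)| + l(y); Gronwall's inequality yields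
   |z(t)|^2 <= |z(0)|^2 exp(2 int_0^t k), and finally
   |q(t)|^2 = |a|^2 + |z|^2 <= 2 |z(t)|^2 <= 2 |v|^2 exp(2 int_0^t k). *)

From Stdlib Require Import Reals Lra Lia Psatz ClassicalEpsilon.
Open Scope R_scope.

Lemma sumR_ext k f g : (forall i, (i < k)%nat -> f i = g i) -> sumR k f = sumR k g.
Proof.
  induction k as [|k IH]; intros H; simpl; auto.
  rewrite IH by (intros; apply H; lia). rewrite H by lia. reflexivity.
Qed.

Lemma sumR_plus k f g : sumR k (fun i => f i + g i) = sumR k f + sumR k g.
Proof. induction k as [|k IH]; simpl; [lra|]. rewrite IH. lra. Qed.

Lemma sumR_scal k c f : sumR k (fun i => c * f i) = c * sumR k f.
Proof. induction k as [|k IH]; simpl; [lra|]. rewrite IH. lra. Qed.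

Lemma sumR_0 k : sumR k (fun _ => 0) = 0.
Proof. induction k as [|k IH]; simpl; lra. Qed.

Lemma sumR_le k f g : (forall i, (i < k)%nat -> f i <= g i) -> sumR k f <= sumR k g.
Proof.
  induction k as [|k IH]; intros H; simpl; [lra|].
  assert (f k <= g k) by (apply H; lia).
  assert (sumR k f <= sumR k g) by (apply IH; intros; apply H; lia). lra.
Qed.

Lemma sumR_nonneg k f : (forall i, (i < k)%nat -> 0 <= f i) -> 0 <= sumR k f.
Proof. intros H. rewrite <- (sumR_0 k). apply sumR_le. auto. Qed.

Lemma sumR_split n m f : sumR (n + m) f = sumR n f + sumR m (fun i => f (n + i)%nat).
Proof.
  induction m as [|m IH]; simpl.
  - rewrite Nat.add_0_r. lra.
  - rewrite Nat.add_succ_r. simpl. rewrite IH. lra.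
Qed.

Lemma sumR_swap p q f :
  sumR p (fun i => sumR q (fun j => f i j)) = sumR q (fun j => sumR p (fun i => f i j)).
Proof.
  induction p as [|p IH]; simpl.
  - rewrite sumR_0. reflexivity.
  - rewrite IH, <- sumR_plus. reflexivity.
Qed.

Lemma sumR_delta k a v :
  (a < k)%nat -> sumR k (fun j => (if Nat.eqb a j then 1 else 0) * v j) = v a.
Proof.
  induction k as [|k IH]; intros H; [lia|]. simpl. destruct (Nat.eqb_spec a k) as [->|Hne].
  - rewrite (sumR_ext _ _ (fun _ => 0)), sumR_0; [lra|].
    intros i Hi. destruct (Nat.eqb_spec k i); [lia|]. lra.
  - rewrite IH by lia. lra.
Qed.

Lemma ip_nonneg k u : 0 <= ip k u u.
Proof. apply sumR_nonneg. intros. nra. Qed.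

Lemma norm_nonneg k u : 0 <= norm k u.
Proof. apply sqrt_pos. Qed.

Lemma norm_sq k u : norm k u ^ 2 = ip k u u.
Proof. apply pow2_sqrt, ip_nonneg. Qed.

Lemma norm_ext k u w : (forall i, (i < k)%nat -> u i = w i) -> norm k u = norm k w.
Proof. intros H. unfold norm, ip. f_equal. apply sumR_ext. intros i Hi. rewrite H; auto. Qed.

Lemma norm_zero_vec k : norm k zero_vec = 0.
Proof.
  unfold norm, ip, zero_vec. rewrite (sumR_ext _ _ (fun _ => 0)) by (intros; ring).
  rewrite sumR_0. apply sqrt_0.
Qed.

Lemma norm_vsub0 k u : norm k (vsub zero_vec u) = norm k u.
Proof. unfold norm, ip, vsub, zero_vec. f_equal. apply sumR_ext. intros; ring. Qed.

Lemma norm_scal k c u : norm k (vscal c u) = Rabs c * norm k u.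
Proof.
  unfold norm, ip, vscal.
  rewrite (sumR_ext _ _ (fun i => c ^ 2 * (u i * u i))) by (intros; ring).
  rewrite sumR_scal, sqrt_mult_alt; [|apply pow2_ge_0].
  rewrite <- Rsqr_pow2, sqrt_Rsqr_abs. reflexivity.
Qed.

Lemma ip_add_r k u v w : ip k u (vadd v w) = ip k u v + ip k u w.
Proof. unfold ip, vadd. rewrite <- sumR_plus. apply sumR_ext. intros; ring. Qed.

Lemma ip_quad k u v l :
  ip k (fun i => u i + l * v i) (fun i => u i + l * v i)
  = ip k u u + 2 * l * ip k u v + l ^ 2 * ip k v v.
Proof. unfold ip. rewrite <- !sumR_scal, <- !sumR_plus. apply sumR_ext. intros; ring. Qed.

Lemma cauchy_schwarz_sq k u v : ip k u v ^ 2 <= ip k u u * ip k v v.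
Proof.
  assert (Hu := ip_nonneg k u). assert (Hv := ip_nonneg k v).
  destruct (Req_dec (ip k v v) 0) as [Hv0|Hv0].
  - (* if [v] has norm 0 then [<u,v> = 0], otherwise [|u + l v|^2 < 0] for a suitable [l] *)
    destruct (Req_dec (ip k u v) 0) as [Huv|Huv]; [rewrite Huv; nra|]. exfalso.
    set (l := - (ip k u u + 1) / (2 * ip k u v)).
    assert (H := ip_nonneg k (fun i => u i + l * v i)). rewrite ip_quad, Hv0 in H.
    assert (2 * l * ip k u v = - (ip k u u + 1)) by (unfold l; field; auto). nra.
  - (* minimise [|u + l v|^2] at [l = - <u,v> / |v|^2] *)
    set (l := - ip k u v / ip k v v).
    assert (H := ip_nonneg k (fun i => u i + l * v i)). rewrite ip_quad in H.
    assert (2 * l * ip k u v + l ^ 2 * ip k v v = - ip k u v ^ 2 / ip k v v)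
      by (unfold l; field; auto).
    assert (Hvp : 0 < ip k v v) by lra.
    assert (ip k u v ^ 2 / ip k v v <= ip k u u) by lra.
    apply (Rmult_le_compat_r (ip k v v)) in H1; [|lra].
    unfold Rdiv in H1. rewrite Rmult_assoc, Rinv_l, Rmult_1_r in H1 by lra. exact H1.
Qed.

Lemma cauchy_schwarz k u v : ip k u v <= norm k u * norm k v.
Proof.
  assert (Hsq := cauchy_schwarz_sq k u v).
  assert (Hu := norm_nonneg k u). assert (Hv := norm_nonneg k v).
  rewrite <- (norm_sq k u), <- (norm_sq k v) in Hsq.
  assert (0 <= norm k u * norm k v) by (apply Rmult_le_pos; auto).
  destruct (Rle_or_lt (ip k u v) (norm k u * norm k v)) as [Hle|Hlt]; [exact Hle|nra].
Qed.

Lemma norm_triangle k u w : norm k (vadd u w) <= norm k u + norm k w.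
Proof.
  assert (Huw := cauchy_schwarz k u w).
  assert (Hu := norm_nonneg k u). assert (Hw := norm_nonneg k w).
  assert (E : ip k (vadd u w) (vadd u w) = ip k u u + 2 * ip k u w + ip k w w).
  { unfold ip, vadd. rewrite <- sumR_scal, <- !sumR_plus. apply sumR_ext. intros; ring. }
  assert (Hs : norm k (vadd u w) ^ 2 <= (norm k u + norm k w) ^ 2).
  { rewrite norm_sq, E, <- (norm_sq k u), <- (norm_sq k w). nra. }
  assert (H0 := norm_nonneg k (vadd u w)). nra.
Qed.

Lemma norm_split_sq n m u :
  norm (n + m) u ^ 2 = norm n u ^ 2 + norm m (proj_z n u) ^ 2.
Proof. rewrite !norm_sq. unfold ip at 1. rewrite sumR_split. reflexivity. Qed.

(* Frobenius norm of a [p x q] matrix; it bounds the operator norm and,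
   unlike it, is obviously continuous in the entries. *)
Definition frob (p q : nat) (A : mat) : R := sqrt (sumR p (fun i => ip q (A i) (A i))).

Lemma frob_nonneg p q A : 0 <= frob p q A.
Proof. apply sqrt_pos. Qed.

(* [|A v| <= |A|_F |v|], by Cauchy-Schwarz row by row. *)
Lemma matvec_frob p q A v : norm p (matvec q A v) <= frob p q A * norm q v.
Proof.
  unfold norm, frob. rewrite <- sqrt_mult.
  2:{ apply sumR_nonneg. intros. apply ip_nonneg. }
  2:{ apply ip_nonneg. }
  apply sqrt_le_1_alt. unfold ip at 1. rewrite (Rmult_comm (sumR p _)), <- sumR_scal.
  apply sumR_le. intros i Hi.
  change (matvec q A v i) with (ip q (A i) v).
  pose proof (cauchy_schwarz_sq q (A i) v). nra.
Qed.

Lemma matvec_scal q A c v i : matvec q A (vscal c v) i = vscal c (matvec q A v) i.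
Proof. unfold matvec, vscal. rewrite <- sumR_scal. apply sumR_ext. intros; ring. Qed.

Definition opset (p q : nat) (A : mat) (y : R) : Prop :=
  exists v, norm q v <= 1 /\ y = norm p (matvec q A v).

Lemma opnorm_lub p q A : is_lub (opset p q A) (opnorm p q A).
Proof.
  unfold opnorm. apply epsilon_spec.
  destruct (completeness (opset p q A)) as [l Hl].
  - exists (frob p q A). intros y [v [Hv ->]].
    apply (Rle_trans _ _ _ (matvec_frob p q A v)).
    pose proof (frob_nonneg p q A). pose proof (norm_nonneg q v). nra.
  - exists (norm p (matvec q A zero_vec)), zero_vec. rewrite norm_zero_vec. split; [lra|auto].
  - exists l. exact Hl.
Qed.

Lemma opnorm_nonneg p q A : 0 <= opnorm p q A.
Proof.
  apply (Rle_trans _ (norm p (matvec q A zero_vec))); [apply norm_nonneg|].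
  apply (proj1 (opnorm_lub p q A)). exists zero_vec. rewrite norm_zero_vec. split; [lra|auto].
Qed.

Lemma opnorm_bound p q A v : norm p (matvec q A v) <= opnorm p q A * norm q v.
Proof.
  pose proof (opnorm_nonneg p q A). pose proof (norm_nonneg q v).
  destruct (Req_dec (norm q v) 0) as [Hv0|Hv0].
  - pose proof (matvec_frob p q A v). rewrite Hv0 in *. lra.
  - (* rescale [v] to the unit sphere *)
    set (r := norm q v). assert (Hr : 0 < r) by (unfold r; lra).
    assert (Hunit : norm q (vscal (/ r) v) = 1).
    { rewrite norm_scal, Rabs_pos_eq by (left; apply Rinv_0_lt_compat; lra).
      fold r. field. lra. }
    assert (Hb : norm p (matvec q A (vscal (/ r) v)) <= opnorm p q A).
    { apply (proj1 (opnorm_lub p q A)). exists (vscal (/ r) v). split; [lra|auto]. }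
    rewrite (norm_ext p _ (vscal (/ r) (matvec q A v))) in Hb by (intros; apply matvec_scal).
    rewrite norm_scal, Rabs_pos_eq in Hb by (left; apply Rinv_0_lt_compat; lra).
    apply (Rmult_le_compat_l r) in Hb; [|lra].
    rewrite <- Rmult_assoc, Rinv_r, Rmult_1_l in Hb by lra. fold r. lra.
Qed.

Lemma opnorm_le_frob_diff p q A B :
  opnorm p q A <= opnorm p q B + frob p q (fun i j => A i j - B i j).
Proof.
  apply (proj2 (opnorm_lub p q A)). intros y [v [Hv ->]].
  rewrite (norm_ext p _ (vadd (matvec q B v) (matvec q (fun i j => A i j - B i j) v))).
  2:{ intros i Hi. unfold vadd, matvec. rewrite <- sumR_plus. apply sumR_ext. intros; ring. }
  apply (Rle_trans _ _ _ (norm_triangle _ _ _)).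
  pose proof (opnorm_bound p q B v). pose proof (matvec_frob p q (fun i j => A i j - B i j) v).
  pose proof (opnorm_nonneg p q B). pose proof (frob_nonneg p q (fun i j => A i j - B i j)).
  pose proof (norm_nonneg q v). nra.
Qed.

Lemma opnorm_dist_le_frob p q A B :
  Rabs (opnorm p q A - opnorm p q B) <= frob p q (fun i j => A i j - B i j).
Proof.
  assert (Hsym : frob p q (fun i j => B i j - A i j) = frob p q (fun i j => A i j - B i j)).
  { unfold frob, ip. f_equal. apply sumR_ext. intros. apply sumR_ext. intros. ring. }
  pose proof (opnorm_le_frob_diff p q A B). pose proof (opnorm_le_frob_diff p q B A).
  apply Rabs_le. lra.
Qed.

Lemma continuity_pt_sumR k (f : nat -> R -> R) s0 :
  (forall i, (i < k)%nat -> continuity_pt (f i) s0) ->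
  continuity_pt (fun s => sumR k (fun i => f i s)) s0.
Proof.
  induction k as [|k IH]; simpl; intros H.
  - apply continuity_pt_const. intros a b. reflexivity.
  - apply continuity_pt_plus; [apply IH|apply H]; intros; try apply H; lia.
Qed.

Lemma continuity_pt_dominated (g phi : R -> R) s0 :
  continuity_pt phi s0 -> phi s0 = 0 ->
  (forall s, Rabs (g s - g s0) <= phi s) -> continuity_pt g s0.
Proof.
  unfold continuity_pt, continue_in, limit1_in, limit_in. intros Hphi Hphi0 Hdom eps Heps.
  destruct (Hphi eps Heps) as [a [Ha Hclose]]. exists a. split; [exact Ha|].
  intros s Hs. specialize (Hclose s Hs). simpl in *. unfold R_dist in *.
  rewrite Hphi0, Rminus_0_r in Hclose.
  pose proof (Hdom s). pose proof (Rle_abs (phi s)). lra.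
Qed.

Lemma sqdist_continuous k (f : nat -> R -> R) s0 :
  (forall i, (i < k)%nat -> continuity_pt (f i) s0) ->
  continuity_pt (fun s => sumR k (fun i => (f i s - f i s0) * (f i s - f i s0))) s0.
Proof.
  intros Hf. apply (continuity_pt_sumR k (fun i s => (f i s - f i s0) * (f i s - f i s0))).
  intros i Hi.
  assert (Hd : continuity_pt (fun s => f i s - f i s0) s0).
  { apply continuity_pt_minus; [apply Hf; exact Hi|].
    apply continuity_pt_const. intros a b. reflexivity. }
  exact (continuity_pt_mult _ _ _ Hd Hd).
Qed.

Lemma continuity_pt_sqrt_comp (f : R -> R) s0 :
  continuity_pt f s0 -> 0 <= f s0 -> continuity_pt (fun s => sqrt (f s)) s0.
Proof. intros Hf Hf0. exact (continuity_pt_comp f sqrt s0 Hf (continuity_pt_sqrt _ Hf0)). Qed.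

Lemma sumR_sqdist_self k (f : nat -> R) : sumR k (fun i => (f i - f i) * (f i - f i)) = 0.
Proof. rewrite (sumR_ext _ _ (fun _ => 0)) by (intros; ring). apply sumR_0. Qed.

Lemma cont_on_comp_curve N (U : vec -> Prop) (h : vec -> R) (P : R -> vec) s0 :
  (forall s, U (P s)) ->
  (forall i, (i < N)%nat -> continuity_pt (fun s => P s i) s0) ->
  cont_on N U h -> continuity_pt (fun s => h (P s)) s0.
Proof.
  intros HU HP Hh.
  assert (Hdist : continuity_pt (fun s => norm N (vsub (P s) (P s0))) s0).
  { apply continuity_pt_sqrt_comp.
    - exact (sqdist_continuous N (fun i s => P s i) s0 HP).
    - apply ip_nonneg. }
  assert (Hdist0 : norm N (vsub (P s0) (P s0)) = 0).
  { unfold norm, ip, vsub. rewrite sumR_sqdist_self. apply sqrt_0. }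
  unfold continuity_pt, continue_in, limit1_in, limit_in in *. intros eps Heps.
  destruct (Hh (P s0) (HU s0) eps Heps) as [d [Hd Hhd]].
  destruct (Hdist d Hd) as [a [Ha Hclose]]. exists a. split; [exact Ha|].
  intros s Hs. specialize (Hclose s Hs). simpl in *. unfold R_dist in *.
  rewrite Hdist0, Rminus_0_r in Hclose. apply Hhd; [apply HU|].
  pose proof (Rle_abs (norm N (vsub (P s) (P s0)))). lra.
Qed.

Lemma opnorm_continuous p q (A : R -> mat) s0 :
  (forall i j, (i < p)%nat -> (j < q)%nat -> continuity_pt (fun s => A s i j) s0) ->
  continuity_pt (fun s => opnorm p q (A s)) s0.
Proof.
  intros HA.
  apply (continuity_pt_dominated _ (fun s => frob p q (fun i j => A s i j - A s0 i j))).
  - apply continuity_pt_sqrt_comp.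
    + apply (continuity_pt_sumR p (fun i s => ip q (fun j => A s i j - A s0 i j)
                                                   (fun j => A s i j - A s0 i j))).
      intros i Hi. exact (sqdist_continuous q (fun j s => A s i j) s0 (fun j Hj => HA i j Hi Hj)).
    + apply sumR_nonneg. intros. apply ip_nonneg.
  - unfold frob, ip. rewrite (sumR_ext _ _ (fun _ => 0)); [rewrite sumR_0; apply sqrt_0|].
    intros i Hi. apply (sumR_sqdist_self q (fun j => A s0 i j)).
  - intros s. apply opnorm_dist_le_frob.
Qed.

Lemma Rmax0_continuous s0 : continuity_pt (fun s => Rmax 0 s) s0.
Proof.
  apply (continuity_pt_dominated _ (fun s => Rabs (s - s0))).
  - apply (continuity_pt_comp (fun s => s - s0) Rabs); [|apply Rcontinuity_abs].
    apply continuity_pt_minus; [apply derivable_continuous_pt, derivable_pt_id|].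
    apply continuity_pt_const. intros a b. reflexivity.
  - rewrite Rminus_diag. apply Rabs_R0.
  - intros s. unfold Rmax.
    destruct (Rle_dec 0 s), (Rle_dec 0 s0); unfold Rabs; repeat destruct Rcase_abs; lra.
Qed.

Lemma derivable_pt_lim_sumR k (f : nat -> R -> R) (f' : nat -> R) c :
  (forall i, (i < k)%nat -> derivable_pt_lim (f i) c (f' i)) ->
  derivable_pt_lim (fun s => sumR k (fun i => f i s)) c (sumR k f').
Proof.
  induction k as [|k IH]; simpl; intros H.
  - apply derivable_pt_lim_const.
  - apply derivable_pt_lim_plus; [apply IH|apply H]; intros; try apply H; lia.
Qed.

Lemma derivable_pt_lim_matvec k (M : R -> mat) (M' : mat) v c i :
  (forall j, (j < k)%nat -> derivable_pt_lim (fun s => M s i j) c (M' i j)) ->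
  derivable_pt_lim (fun s => matvec k (M s) v i) c (matvec k M' v i).
Proof.
  intros HM. apply (derivable_pt_lim_sumR k (fun j s => M s i j * v j)). intros j Hj.
  replace (M' i j * v j) with (M' i j * v j + M c i j * 0) by ring.
  apply (derivable_pt_lim_mult (fun s => M s i j) (fun _ => v j)); [apply HM; exact Hj|].
  apply derivable_pt_lim_const.
Qed.

Lemma derivable_pt_lim_norm_sq k (u : R -> vec) (u' : vec) c :
  (forall i, (i < k)%nat -> derivable_pt_lim (fun s => u s i) c (u' i)) ->
  derivable_pt_lim (fun s => ip k (u s) (u s)) c (2 * ip k (u c) u').
Proof.
  intros Hu. unfold ip. rewrite <- sumR_scal.
  apply (derivable_pt_lim_sumR k (fun i s => u s i * u s i)). intros i Hi.
  replace (2 * (u c i * u' i)) with (u' i * u c i + u c i * u' i) by ring.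
  apply (derivable_pt_lim_mult (fun s => u s i) (fun s => u s i)); apply Hu; exact Hi.
Qed.

Lemma nonincreasing_of_nonpos_derivative (h h' : R -> R) a b :
  a <= b ->
  (forall c, a <= c <= b -> derivable_pt_lim h c (h' c)) ->
  (forall c, a <= c <= b -> h' c <= 0) ->
  h b <= h a.
Proof.
  intros Hab Hd Hneg. destruct (Rle_lt_or_eq_dec a b Hab) as [Hlt|<-]; [|apply Rle_refl].
  destruct (MVT_cor2 h h' a b Hlt Hd) as [c [Hmvt Hc]].
  assert (h' c <= 0) by (apply Hneg; lra).
  assert (h' c * (b - a) <= 0) by (nra). lra.
Qed.

Lemma gronwall (S S' k K : R -> R) t :
  0 <= t ->
  (forall c, 0 <= c <= t -> derivable_pt_lim S c (S' c)) ->
  (forall c, 0 <= c <= t -> derivable_pt_lim K c (k c)) ->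
  (forall c, 0 <= c <= t -> S' c <= k c * S c) ->
  S t <= S 0 * exp (K t - K 0).
Proof.
  intros Ht HS HK Hineq.
  (* [S * exp (- K)] is nonincreasing on [0, t] *)
  assert (Hdecr : S t * exp (- K t) <= S 0 * exp (- K 0)).
  { apply (nonincreasing_of_nonpos_derivative (fun s => S s * exp (- K s))
             (fun c => S' c * exp (- K c) + S c * (exp (- K c) * - k c)) 0 t Ht).
    - intros c Hc. apply (derivable_pt_lim_mult S (fun s => exp (- K s))); [apply HS; exact Hc|].
      apply (derivable_pt_lim_comp (fun s => - K s) exp); [|apply derivable_pt_lim_exp].
      apply derivable_pt_lim_opp. apply HK. exact Hc.
    - intros c Hc. pose proof (Hineq c Hc). pose proof (exp_pos (- K c)).
      replace (S' c * exp (- K c) + S c * (exp (- K c) * - k c))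
        with (exp (- K c) * (S' c - k c * S c)) by ring.
      nra. }
  apply (Rmult_le_compat_r (exp (K t))) in Hdecr; [|left; apply exp_pos].
  rewrite Rmult_assoc, <- exp_plus, Rplus_opp_l, exp_0, Rmult_1_r in Hdecr.
  rewrite Rmult_assoc, <- exp_plus in Hdecr.
  replace (- K 0 + K t) with (K t - K 0) in Hdecr by ring. exact Hdecr.
Qed.

Lemma continuous_primitive (f : R -> R) t :
  0 <= t -> (forall s, continuity_pt f s) ->
  exists K : R -> R, K 0 = 0 /\
    (forall c, 0 <= c <= t -> derivable_pt_lim K c (f c)) /\
    (forall g, (forall s, 0 <= s <= t -> g s = f s) ->
       exists pr : Riemann_integrable g 0 t, RiemannInt pr = K t).
Proof.
  intros Ht Hf.
  assert (Hf0t : forall s, 0 <= s <= t -> continuity_pt f s) by auto.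
  exists (primitive Ht (FTC_P1 Ht Hf0t)). repeat split.
  - unfold primitive. destruct (Rle_dec 0 0); [|exfalso; lra]. destruct (Rle_dec 0 t); [|exfalso; lra].
    apply RiemannInt_P9.
  - intros c Hc. apply RiemannInt_P28. exact Hc.
  - intros g Hg.
    assert (Hfg : forall s, Rmin 0 t <= s <= Rmax 0 t -> f s = g s).
    { intros s Hs. rewrite Rmin_left, Rmax_right in Hs by exact Ht. symmetry. apply Hg. exact Hs. }
    exists (@Riemann_integrable_ext f g 0 t Hfg (@continuity_implies_RiemannInt f 0 t Ht Hf0t)).
    unfold primitive. destruct (Rle_dec 0 t); [|exfalso; lra]. destruct (Rle_dec t t); [|exfalso; lra].
    apply RiemannInt_P18; [exact Ht|]. intros s Hs. apply Hg. lra.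
Qed.

Lemma matvec_matmul k A B v i :
  matvec k (matmul k A B) v i = matvec k A (matvec k B v) i.
Proof.
  unfold matvec, matmul.
  rewrite (sumR_ext _ _ (fun l => sumR k (fun j => A i j * B j l * v l))).
  2:{ intros l Hl. rewrite Rmult_comm, <- sumR_scal. apply sumR_ext. intros; ring. }
  rewrite sumR_swap. apply sumR_ext. intros j Hj.
  rewrite <- sumR_scal. apply sumR_ext. intros; ring.
Qed.

Lemma outside_cone_a_le_z n m q :
  Lf n m q zero_vec <= 0 -> norm n q <= norm m (proj_z n q).
Proof.
  unfold Lf, proj_a. intros HL.
  change (proj_z n (vsub zero_vec q)) with (vsub zero_vec (proj_z n q)) in HL.
  rewrite !norm_vsub0 in HL.
  pose proof (norm_nonneg n q). pose proof (norm_nonneg m (proj_z n q)). nra.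
Qed.

Lemma z_block_matvec n m (DF : vec -> mat) y q i :
  proj_z n (matvec (n + m) (DF y) q) i
  = vadd (matvec n (Dag n DF y) q) (matvec m (Dzg n DF y) (proj_z n q)) i.
Proof. unfold proj_z, matvec at 1. rewrite sumR_split. reflexivity. Qed.

Lemma z_growth_outside_cone n m (DF : vec -> mat) y l q :
  (forall z', ip m z' (matvec m (Dzg n DF y) z') <= l * norm m z' ^ 2) ->
  norm n q <= norm m (proj_z n q) ->
  ip m (proj_z n q) (proj_z n (matvec (n + m) (DF y) q))
    <= (opnorm m n (Dag n DF y) + l) * norm m (proj_z n q) ^ 2.
Proof.
  intros Hl Haz. set (z := proj_z n q).
  unfold ip at 1. rewrite (sumR_ext _ _ (fun i => z i * vadd (matvec n (Dag n DF y) q)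
                                                  (matvec m (Dzg n DF y) z) i))
    by (intros i Hi; rewrite z_block_matvec; reflexivity).
  fold (ip m z (vadd (matvec n (Dag n DF y) q) (matvec m (Dzg n DF y) z))).
  rewrite ip_add_r.
  assert (Hcross : ip m z (matvec n (Dag n DF y) q) <= opnorm m n (Dag n DF y) * norm m z ^ 2).
  { apply (Rle_trans _ _ _ (cauchy_schwarz m z _)).
    assert (Hnz := norm_nonneg m z). assert (Ho := opnorm_nonneg m n (Dag n DF y)).
    assert (HDq : norm m (matvec n (Dag n DF y) q) <= opnorm m n (Dag n DF y) * norm m z).
    { apply (Rle_trans _ _ _ (opnorm_bound m n (Dag n DF y) q)).
      apply Rmult_le_compat_l; assumption. }
    apply (Rmult_le_compat_l (norm m z)) in HDq; [|exact Hnz]. lra. }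
  pose proof (Hl z). lra.
Qed.

(* From [a^2 <= 2 b^2] to the cruder [a <= 2 b] used in the statement. *)
Lemma le_two_of_sq_le_two_sq a b : 0 <= a -> 0 <= b -> a ^ 2 <= 2 * b ^ 2 -> a <= 2 * b.
Proof.
  intros Ha Hb Hab. destruct (Rle_or_lt a (2 * b)) as [Hle|Hlt]; [exact Hle|nra].
Qed.

Section TangentGrowth.

Variables (n m : nat) (DF : vec -> mat) (U : vec -> Prop) (ell : vec -> R)
  (Phi : R -> vec -> vec) (Q : R -> vec -> mat) (x v : vec).

Hypothesis DF_continuous : forall i j, (i < n + m)%nat -> (j < n + m)%nat ->
  cont_on (n + m) U (fun y => DF y i j).
Hypothesis ell_continuous : cont_on (n + m) U ell.
Hypothesis Dzg_bound : forall y, U y -> forall z',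
  ip m z' (matvec m (Dzg n DF y) z') <= ell y * norm m z' ^ 2.
Hypothesis orbit_in_U : forall t, t >= 0 -> U (Phi t x).
Hypothesis orbit_continuous : forall t, t >= 0 -> forall i, (i < n + m)%nat ->
  continuity_pt (fun s => Phi s x i) t.
Hypothesis Q_initial : forall i j, (i < n + m)%nat -> (j < n + m)%nat ->
  Q 0 x i j = if Nat.eqb i j then 1 else 0.
Hypothesis Q_variational : forall t, t >= 0 -> forall i j, (i < n + m)%nat -> (j < n + m)%nat ->
  derivable_pt_lim (fun s => Q s x i j) t (matmul (n + m) (DF (Phi t x)) (Q t x) i j).
Hypothesis v_in_T : forall t, t >= 0 -> Lf n m (matvec (n + m) (Q t x) v) zero_vec <= 0.

(* The orbit, frozen at [x] for negative times so that it stays in [U]. *)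
Definition ext_orbit (s : R) : vec := Phi (Rmax 0 s) x.

Definition rate (s : R) : R := opnorm m n (Dag n DF (ext_orbit s)) + ell (ext_orbit s).

Definition tangent (s : R) : vec := matvec (n + m) (Q s x) v.
Definition zsq (s : R) : R := ip m (proj_z n (tangent s)) (proj_z n (tangent s)).

Definition zsq' (c : R) : R :=
  2 * ip m (proj_z n (tangent c)) (proj_z n (matvec (n + m) (DF (Phi c x)) (tangent c))).

Lemma ext_orbit_in_U s : U (ext_orbit s).
Proof. apply orbit_in_U, Rle_ge, Rmax_l. Qed.

Lemma ext_orbit_eq s : 0 <= s -> ext_orbit s = Phi s x.
Proof. intros Hs. unfold ext_orbit. rewrite Rmax_right by exact Hs. reflexivity. Qed.

Lemma ext_orbit_continuous s0 i : (i < n + m)%nat -> continuity_pt (fun s => ext_orbit s i) s0.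
Proof.
  intros Hi. apply (continuity_pt_comp (fun s => Rmax 0 s) (fun u => Phi u x i)).
  - apply Rmax0_continuous.
  - apply orbit_continuous; [apply Rle_ge, Rmax_l|exact Hi].
Qed.

Lemma rate_continuous s0 : continuity_pt rate s0.
Proof.
  apply continuity_pt_plus.
  - apply (opnorm_continuous m n (fun s => Dag n DF (ext_orbit s))). intros i j Hi Hj.
    apply (cont_on_comp_curve (n + m) U (fun y => DF y (n + i)%nat j) ext_orbit).
    + exact ext_orbit_in_U.
    + intros k Hk. apply ext_orbit_continuous. exact Hk.
    + apply DF_continuous; lia.
  - apply (cont_on_comp_curve (n + m) U ell ext_orbit).
    + exact ext_orbit_in_U.
    + intros k Hk. apply ext_orbit_continuous. exact Hk.
    + exact ell_continuous.
Qed.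

Lemma tangent_derivative c i : 0 <= c -> (i < n + m)%nat ->
  derivable_pt_lim (fun s => tangent s i) c (matvec (n + m) (DF (Phi c x)) (tangent c) i).
Proof.
  intros Hc Hi. unfold tangent. rewrite <- matvec_matmul.
  apply derivable_pt_lim_matvec. intros j Hj. apply Q_variational; [lra|exact Hi|exact Hj].
Qed.

Lemma zsq_derivative c : 0 <= c ->
  derivable_pt_lim zsq c (zsq' c).
Proof.
  intros Hc. apply (derivable_pt_lim_norm_sq m (fun s => proj_z n (tangent s))).
  intros i Hi. apply tangent_derivative; [exact Hc|lia].
Qed.

Lemma tangent_a_le_z s : 0 <= s -> norm n (tangent s) <= norm m (proj_z n (tangent s)).
Proof. intros Hs. apply outside_cone_a_le_z, v_in_T. lra. Qed.

Lemma zsq_derivative_le c : 0 <= c -> zsq' c <= 2 * rate c * zsq c.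
Proof.
  intros Hc. unfold zsq', rate, zsq. rewrite ext_orbit_eq, <- norm_sq by exact Hc.
  assert (Hgrowth := z_growth_outside_cone n m DF (Phi c x) (ell (Phi c x)) (tangent c)
                       (Dzg_bound (Phi c x) (orbit_in_U c ltac:(lra))) (tangent_a_le_z c Hc)).
  lra.
Qed.

Lemma tangent_initial i : (i < n + m)%nat -> tangent 0 i = v i.
Proof.
  intros Hi. unfold tangent, matvec.
  rewrite (sumR_ext _ _ (fun j => (if Nat.eqb i j then 1 else 0) * v j)).
  - apply sumR_delta. exact Hi.
  - intros j Hj. rewrite Q_initial by assumption. reflexivity.
Qed.

Lemma zsq_initial : zsq 0 <= norm (n + m) v ^ 2.
Proof.
  unfold zsq. rewrite <- norm_sq, (norm_split_sq n m v).
  rewrite (norm_ext m _ (proj_z n v)) by (intros i Hi; apply tangent_initial; lia).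
  pose proof (pow2_ge_0 (norm n v)). lra.
Qed.

Theorem tangent_growth t : 0 <= t ->
  exists pr : Riemann_integrable (fun s => opnorm m n (Dag n DF (Phi s x)) + ell (Phi s x)) 0 t,
    norm (n + m) (tangent t) <= 2 * norm (n + m) v * exp (RiemannInt pr).
Proof.
  intros Ht.
  destruct (continuous_primitive rate t Ht rate_continuous) as [K [HK0 [HK Hint]]].
  destruct (Hint (fun s => opnorm m n (Dag n DF (Phi s x)) + ell (Phi s x))) as [pr Hpr].
  { intros s Hs. unfold rate. rewrite ext_orbit_eq by lra. reflexivity. }
  exists pr. rewrite Hpr.
  assert (Hgr : zsq t <= zsq 0 * exp (2 * K t - 2 * K 0)).
  { apply (gronwall zsq zsq' (fun c => 2 * rate c) (fun c => 2 * K c) t Ht).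
    - intros c Hc. apply zsq_derivative. lra.
    - intros c Hc. apply (derivable_pt_lim_scal K 2 c). apply HK. exact Hc.
    - intros c Hc. apply zsq_derivative_le. lra. }
  rewrite HK0, Rmult_0_r, Rminus_0_r in Hgr.
  (* [|q|^2 = |a|^2 + |z|^2 <= 2 |z|^2] *)
  assert (Hsplit := norm_split_sq n m (tangent t)).
  assert (Haz := tangent_a_le_z t Ht). assert (Hn := norm_nonneg n (tangent t)).
  assert (Hz : norm m (proj_z n (tangent t)) ^ 2 = zsq t) by apply norm_sq.
  assert (Hexp : exp (2 * K t) = exp (K t) ^ 2).
  { replace (exp (K t) ^ 2) with (exp (K t) * exp (K t)) by ring.
    rewrite <- exp_plus. f_equal. ring. }
  assert (Ha2 : norm n (tangent t) ^ 2 <= norm m (proj_z n (tangent t)) ^ 2)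
    by (apply pow_incr; auto).
  assert (H0 : zsq 0 * exp (2 * K t) <= norm (n + m) v ^ 2 * exp (K t) ^ 2).
  { rewrite Hexp. apply Rmult_le_compat_r; [apply pow2_ge_0|apply zsq_initial]. }
  rewrite Rmult_assoc. apply le_two_of_sq_le_two_sq; [apply norm_nonneg| |].
  - apply Rmult_le_pos; [apply norm_nonneg|left; apply exp_pos].
  - rewrite Rpow_mult_distr. lra.
Qed.

End TangentGrowth.

Theorem lemma2p6
  (n m : nat)
  (F : vec -> vec)               (* F = (f,g) : first n components f, next m components g *)
  (DF : vec -> mat)              (* total derivative of F *)
  (U Gamma : vec -> Prop)
  (alpha ell : vec -> R) (c1 : R)
  (Phi : R -> vec -> vec)        (* flow *)
  (Q : R -> vec -> mat)          (* fundamental matrix of the variational equation *)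
  (* Hypothesis 1 *)
  (HUopen : is_open (n + m) U)
  (HUconv : is_convex U)
  (H1 : exists d, d > 0 /\ forall x x', U x -> U x' -> Ccone n m x x' -> Bd n m d x x')
  (* Hypothesis 2: f, g are C^1 on U *)
  (HDF : frechet_on (n + m) U F DF)
  (HDFcont : forall i j, (i < n + m)%nat -> (j < n + m)%nat -> cont_on (n + m) U (fun y => DF y i j))
  (Halpha_cont : cont_on (n + m) U alpha)
  (Hell_cont : cont_on (n + m) U ell)
  (Halpha_pos : forall x, U x -> alpha x > 0)
  (Hell_nonneg : forall x, U x -> ell x >= 0)
  (Hc1 : c1 > 0)
  (H2a : forall x, U x -> forall a' : vec,
      ip n a' (matvec n (Daf DF x) a') >= alpha x * (norm n a') ^ 2)
  (H2z : forall x, U x -> forall z' : vec,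
      ip m z' (matvec m (Dzg n DF x) z') <= ell x * (norm m z') ^ 2)
  (H2c : forall x, U x ->
      alpha x >= ell x + opnorm n m (Dzf n DF x) + opnorm m n (Dag n DF x) + c1)
  (* Hypothesis 3 *)
  (HGU : forall x, Gamma x -> U x)
  (HPhi0 : forall x, Gamma x -> forall i, (i < n + m)%nat -> Phi 0 x i = x i)
  (HPhi_ode : forall x, Gamma x -> forall t, t >= 0 -> forall i, (i < n + m)%nat ->
      derivable_pt_lim (fun s => Phi s x i) t (F (Phi t x) i))
  (HGinv : forall x, Gamma x -> forall t, t >= 0 -> Gamma (Phi t x))
  (HGproj1 : forall x, Gamma x -> exists u, U u /\ forall i, (i < m)%nat -> u (n + i)%nat = x (n + i)%nat)
  (HGproj2 : forall u, U u -> exists x, Gamma x /\ forall i, (i < m)%nat -> x (n + i)%nat = u (n + i)%nat)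
  (* Q(t,x) : fundamental matrix, Q(0,x) = I, d/dt Q = DF(Phi(t,x)) Q *)
  (HQ0 : forall x, Gamma x -> forall i j, (i < n + m)%nat -> (j < n + m)%nat ->
      Q 0 x i j = if Nat.eqb i j then 1 else 0)
  (HQ_ode : forall x, Gamma x -> forall t, t >= 0 -> forall i j, (i < n + m)%nat -> (j < n + m)%nat ->
      derivable_pt_lim (fun s => Q s x i j) t (matmul (n + m) (DF (Phi t x)) (Q t x) i j)) :
  forall x, Gamma x -> forall v : vec,
    (* v in T(x) *)
    (forall t, t >= 0 -> Lf n m (matvec (n + m) (Q t x) v) zero_vec <= 0) ->
    forall t, t >= 0 ->
      exists pr : Riemann_integrable
          (fun s => opnorm m n (Dag n DF (Phi s x)) + ell (Phi s x)) 0 t,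
        norm (n + m) (matvec (n + m) (Q t x) v)
          <= 2 * norm (n + m) v * exp (RiemannInt pr).
Proof.
  intros x Hx v HT t Ht.
  apply (tangent_growth n m DF U ell Phi Q x v HDFcont Hell_cont H2z).
  -
    intros s Hs. apply HGU, HGinv; assumption.
  -
    intros s Hs i Hi. apply derivable_continuous_pt.
    exists (F (Phi s x) i). apply HPhi_ode; assumption.
  - apply HQ0. exact Hx.
  - apply HQ_ode. exact Hx.
  - exact HT.
  - lra.
Qed.
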